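(* Let $n\ge1$, let $C$ be a finite set of points in convex position, and let the edges of $K_C$ be $2$-coloured. Suppose there are disjoint sets $L,R\subset C$ with $|L|=|R|=2n^2$ such that $L$ and $R$ can be separated by a line and all edges between $L$ and $R$ have the same colour. Then the colouring contains a monochromatic non-crossing copy of $L_{2n}$.
   Context: For a finite point set $C\subset\mathbb{R}^2$ in convex position (vertex set of a convex polygon), $K_C$ is the complete graph on $C$ with edges drawn as straight segments. A monochromatic non-crossing copy of a graph $G$ is an injective map $\phi:V(G)\to C$ such that all segments $\phi(x)\phi(y)$, $xy\in E(G)$, have the same colour and no two of them share a point other than a common endpoint. The ladder graph $L_{2n}$ consists of two paths $u_1\cdots u_n$ and $v_1\cdots v_n$ plus the edges $u_iv_i$, $i\in[n]$. *)

From HB Require Import structures.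
From mathcomp Require Import all_boot all_order all_algebra.
Set Implicit Arguments. Unset Strict Implicit. Unset Printing Implicit Defensive.
Import Order.TTheory GRing.Theory Num.Theory.
Local Open Scope ring_scope.

Definition point (R : realFieldType) := (R * R)%type.

Definition on_seg (R : realFieldType) (p a b : point R) : Prop :=
  exists t : R, 0 <= t /\ t <= 1 /\
    p = (a.1 + t * (b.1 - a.1), a.2 + t * (b.2 - a.2)).

Definition in_hull (R : realFieldType) (S : seq (point R)) (p : point R) : Prop :=
  exists w : 'I_(size S) -> R,
    (forall i, 0 <= w i) /\ \sum_(i < size S) w i = 1 /\
    \sum_(i < size S) w i * (nth p S i).1 = p.1 /\
    \sum_(i < size S) w i * (nth p S i).2 = p.2.

Definition convex_position (R : realFieldType) (C : seq (point R)) : Prop :=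
  uniq C /\ forall p, p \in C -> ~ in_hull (rem p C) p.

Definition line_separated (R : realFieldType) (L Rs : seq (point R)) : Prop :=
  exists a b c : R, (a != 0 \/ b != 0) /\
    (forall p, p \in L -> a * p.1 + b * p.2 < c) /\
    (forall p, p \in Rs -> a * p.1 + b * p.2 > c).

(* The ladder graph L_{2n}: vertex (false,i) is u_{i+1}, (true,i) is v_{i+1}. *)
Definition ladder_adj (n : nat) (x y : bool * 'I_n) : bool :=
  ((x.1 == y.1) && ((x.2.+1 == y.2 :> nat) || (y.2.+1 == x.2 :> nat)))
  || ((x.1 != y.1) && (x.2 == y.2)).

Definition mono_noncrossing_ladder (R : realFieldType) (n : nat)
    (C : seq (point R)) (col : point R -> point R -> bool) : Prop :=
  exists (phi : bool * 'I_n -> point R) (c : bool),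
    injective phi /\
    (forall x, phi x \in C) /\
    (forall x y, ladder_adj x y -> col (phi x) (phi y) = c) /\
    (forall x y x' y', ladder_adj x y -> ladder_adj x' y' ->
       ~ (x = x' /\ y = y') -> ~ (x = y' /\ y = x') ->
       forall p, on_seg p (phi x) (phi y) -> on_seg p (phi x') (phi y') ->
         (p = phi x \/ p = phi y) /\ (p = phi x' \/ p = phi y')).

(* Some point o of R (the last point of R seen counterclockwise
      from a point of L) is such that, sweeping C counterclockwise around o,
      all of L comes before all of R; any other order would give a convex
      quadrilateral whose crossing diagonals are separated by a line.
      Points listed in sweeping order form a convex chain.
   2. Dichotomy.  By a Dilworth-type lemma, more than (n-1)(2n-1) points
      contain an n-path of colour c0 (consecutive points joined in colour
      c0) or 2n points pairwise joined in the other colour.  We apply it to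
      L and to R, each sorted in sweeping order.
   3. Ladders on convex chains.  Placing u_1, ..., u_n, v_n, ..., v_1 along a
      convex chain, every ladder edge joins consecutive or mirror positions;
      such chords never interleave, hence never cross.  So 2n points
      pairwise joined in one colour carry a ladder, and so do a c0-path in
      L followed by a c0-path in R, since L-R edges have colour c0. *)

From HB Require Import structures.
From mathcomp Require Import all_boot all_order all_algebra.
From mathcomp Require Import ring lra zify.
Import Order.TTheory GRing.Theory Num.Theory.
Set Implicit Arguments. Unset Strict Implicit. Unset Printing Implicit Defensive.

Lemma size_bounded_labels (s : seq nat) k m :
  (forall v, v \in s -> 0 < v <= k) ->
  (forall v, count_mem v s < m) -> size s <= k * m.-1.
Proof.
elim: k s => [|k IH] s hs hc.
  by case: s hs {hc} => // v s /(_ v); rewrite inE eqxx => /(_ isT); lia.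
rewrite -(count_predC (pred1 k.+1)) mulSn; apply: leq_add.
  by have := hc k.+1; case: (m) => //= m'; rewrite ltnS.
rewrite -size_filter; apply: IH => [v|v].
  by rewrite mem_filter => /andP [/= vk /hs]; move: vk; lia.
by rewrite count_filter; apply: leq_ltn_trans (hc v); apply: sub_count => w /andP [].
Qed.

Section ChainOrAntichain.
Variables (T : eqType) (e : rel T).

Definition max_related_label (x : T) (z : seq (T * nat)) : nat :=
  foldr (fun a acc => if e x a.1 then maxn a.2 acc else acc) 0 z.

(* Labels every entry of [s], from right to left, with one more than the
   largest label of a later entry it relates to: the length of a greedy
   [e]-path through [s] starting at that entry. *)
Fixpoint chain_label (s : seq T) : seq (T * nat) :=
  if s is x :: t then (x, (max_related_label x (chain_label t)).+1) :: chain_label t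
  else [::].

Lemma max_related_label_ge x z a :
  a \in z -> e x a.1 -> a.2 <= max_related_label x z.
Proof.
elim: z => //= b z IH; rewrite inE => /orP [/eqP <- -> | az ea]; first exact: leq_maxl.
case: ifP => _; last exact: IH.
exact: leq_trans (IH az ea) (leq_maxr _ _).
Qed.

Lemma max_related_label_attained x z : max_related_label x z = 0 \/
  exists2 a, a \in z & e x a.1 /\ a.2 = max_related_label x z.
Proof.
elim: z => [|b z IH] /=; first by left.
case: ifP => eb; last first.
  by case: IH => [->|[a az ha]]; [left | right; exists a; rewrite ?inE ?az ?orbT].
right; case: (leqP (max_related_label x z) b.2) => h.
  by exists b; rewrite ?inE ?eqxx //; split => //; apply/esym/maxn_idPl.
case: IH => [z0|[a az [ea ha]]]; first lia.
by exists a; rewrite ?inE ?az ?orbT //; split => //; rewrite ha; apply/esym/maxn_idPr/ltnW.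
Qed.

Lemma chain_label_fst s : map fst (chain_label s) = s.
Proof. by elim: s => //= x s ->. Qed.

Lemma chain_label_pos s a : a \in chain_label s -> 0 < a.2.
Proof. by elim: s => //= x s IH; rewrite inE => /orP [/eqP -> | /IH]. Qed.

(* Labels strictly decrease along [e]: entries with equal labels are unrelated. *)
Lemma chain_label_decr s :
  pairwise (fun a b => e a.1 b.1 ==> (b.2 < a.2)) (chain_label s).
Proof.
elim: s => //= x s IH; rewrite IH andbT; apply/allP => a az /=.
by apply/implyP => ea; rewrite ltnS; apply: max_related_label_ge.
Qed.

Lemma chain_label_path s a : a \in chain_label s ->
  exists p, [/\ subseq (a.1 :: p) s, size p = a.2.-1 & path e a.1 p].
Proof.
elim: s a => //= x s IH a; rewrite inE => /orP [/eqP -> /= | az]; last first.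
  have [p [sub_p size_p path_p]] := IH a az; exists p; split => //.
  exact: subseq_trans sub_p (subseq_cons _ _).
case: (max_related_label_attained x (chain_label s)) => [->|[b bz [eb hb]]].
  by exists [::]; rewrite /= eqxx sub0seq.
have [p [sub_p size_p path_p]] := IH b bz.
exists (b.1 :: p); split; first by rewrite /= eqxx.
  by rewrite /= size_p -hb (prednK (chain_label_pos bz)).
by rewrite /= eb path_p.
Qed.

Lemma chain_or_antichain (s : seq T) n m : 0 < n -> 0 < m ->
  n.-1 * m.-1 < size s ->
  (exists p, [/\ subseq p s, size p = n & sorted e p]) \/
  (exists p, [/\ subseq p s, size p = m & pairwise (fun x y => ~~ e x y) p]).
Proof.
move=> n0 m0 big_s; set ls := chain_label s.
case: (boolP (has (fun a => n <= a.2) ls)) => [/hasP [a az ha]|short].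
  left; have [p [sub_p size_p path_p]] := chain_label_path az.
  exists (take n (a.1 :: p)); split; first exact: subseq_trans (take_subseq _ _) sub_p.
    by rewrite size_takel //= size_p (prednK (chain_label_pos az)).
  exact: take_sorted.
right; set labels := map snd ls.
have [/hasP [v _ many_v] | few] := boolP (has (fun v => m <= count_mem v labels) labels).
  set F := filter (fun a => a.2 == v) ls.
  have antichain_F : pairwise (fun a b => ~~ e a.1 b.1) F.
    apply: (sub_in_pairwise (P := fun a => a.2 == v)) (pairwise_filter _ (chain_label_decr s)).
      by move=> a b /eqP av /eqP bv; rewrite av bv ltnn implybF.
    by apply/allP => a; rewrite mem_filter => /andP [].
  exists (take m (map fst F)); split.
  - apply: subseq_trans (take_subseq _ _) _.
    by rewrite -[X in subseq _ X](chain_label_fst s) map_subseq // filter_subseq.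
  - by rewrite size_takel // size_map size_filter; move: many_v; rewrite count_map.
  - by apply: subseq_pairwise (take_subseq _ _) _; rewrite pairwise_map.
exfalso; move: big_s; rewrite -(chain_label_fst s) size_map -/ls -(size_map snd) -/labels.
rewrite ltnNge; apply/negP/negPn/size_bounded_labels => v.
  move=> /mapP [a az ->]; rewrite (chain_label_pos az) /= -ltnS prednK // ltnNge.
  by apply/negP => na; move/negP: short; apply; apply/hasP; exists a.
case: (boolP (v \in labels)) => [vl|/count_memPn -> //].
by rewrite ltnNge; apply/negP => mv; move/negP: few; apply; apply/hasP; exists v.
Qed.

End ChainOrAntichain.

(* The ladder drawn on positions 0, ..., 2n-1 of a cycle: u_1, ..., u_n at
   0, ..., n-1 and v_n, ..., v_1 at n, ..., 2n-1.  Then every ladder edge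
   joins two consecutive positions or two mirror positions i and 2n-1-i. *)
Definition ladder_pos n (x : bool * 'I_n) : nat :=
  if x.1 then ((2 * n).-1 - x.2)%N else x.2.

Lemma ladder_pos_lt n (x : bool * 'I_n) : ladder_pos x < 2 * n.
Proof. by case: x => [[] [i lt_i_n]]; rewrite /ladder_pos /=; lia. Qed.

Lemma ladder_pos_inj n : injective (@ladder_pos n).
Proof.
move=> [[] [i hi]] [[] [j hj]]; rewrite /ladder_pos /= => h; try lia;
  by congr (_, _); apply: val_inj => /=; lia.
Qed.

Definition ladder_link n (i j : nat) : bool :=
  [|| i.+1 == j, j.+1 == i | i + j == (2 * n).-1].

Lemma ladder_adj_link n (x y : bool * 'I_n) : ladder_adj x y ->
  ladder_link n (ladder_pos x) (ladder_pos y) && (ladder_pos x != ladder_pos y).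
Proof.
case: x y => [[] [i hi]] [[] [j hj]]; rewrite /ladder_adj /ladder_link /ladder_pos /=;
  by [move=> /orP [/orP [] | //] /eqP; lia | move=> /eqP [] ->; lia].
Qed.

Definition cyclic_order (i j k : nat) : bool :=
  [|| (i < j < k), (j < k < i) | (k < i < j)].

Lemma ladder_links_nested n a b c d :
  ladder_link n a b -> ladder_link n c d ->
  [&& a != c, a != d, b != c & b != d] ->
  cyclic_order a b c = cyclic_order a b d.
Proof. by rewrite /ladder_link /cyclic_order; lia. Qed.

Local Open Scope ring_scope.

Section Orientation.
Variable R : realFieldType.
Implicit Types a b c d p : point R.

Definition orient a b c : R :=
  (b.1 - a.1) * (c.2 - a.2) - (b.2 - a.2) * (c.1 - a.1).

Lemma orient_cyc a b c : orient a b c = orient b c a.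
Proof. by rewrite /orient; ring. Qed.

Lemma orient_swap a b c : orient a c b = - orient a b c.
Proof. by rewrite /orient; ring. Qed.

(* An identity holding up to a multiple of a vanishing orientation holds;
   this checks the combinations of collinear points used below. *)
Lemma eq_of_orient0 (X Y k : R) a b c :
  orient a b c = 0 -> X - Y = k * orient a b c -> X = Y.
Proof. by move=> -> /eqP; rewrite mulr0 subr_eq0 => /eqP. Qed.

Lemma orient_pos_neq a b c : 0 < orient a b c -> [/\ a != b, b != c & a != c].
Proof. by rewrite /orient => h; split; apply/eqP => e; move: h; rewrite e; lra. Qed.

Lemma on_seg_sym p a b : on_seg p a b -> on_seg p b a.
Proof.
case=> t [t0 [t1 ->]]; exists (1 - t); split; [lra | split; [lra |]].
by congr (_, _) => /=; ring.
Qed.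

Lemma on_seg_orient p a b : on_seg p a b -> orient a b p = 0.
Proof. by case=> t [_ [_ ->]]; rewrite /orient /=; ring. Qed.

Lemma on_seg_one_side p a b c d : on_seg p a b -> on_seg p c d ->
  0 < orient a b c * orient a b d -> False.
Proof.
move=> /on_seg_orient p_ab [t [t0 [t1 ep]]] same_side.
have split_p : orient a b p = (1 - t) * orient a b c + t * orient a b d.
  by rewrite ep /orient /=; ring.
have oc_neq0 : orient a b c != 0 by apply: contraTneq same_side => ->; rewrite mul0r ltxx.
have oc2_pos : 0 < orient a b c ^+ 2 by rewrite exprn_even_gt0.
have weighted_pos :
    0 < (1 - t) * orient a b c ^+ 2 + t * (orient a b c * orient a b d).
  have [t_lt1|t_ge1] := ltrP t 1.
    have t1_pos : 0 < 1 - t by rewrite subr_gt0.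
    have := mulr_gt0 t1_pos oc2_pos; have := mulr_ge0 t0 (ltW same_side); lra.
  have -> : t = 1 by lra.
  by rewrite subrr mul0r add0r mul1r.
have : orient a b c * orient a b p = 0 by rewrite p_ab mulr0.
rewrite split_p.
have -> : orient a b c * ((1 - t) * orient a b c + t * orient a b d) =
  (1 - t) * orient a b c ^+ 2 + t * (orient a b c * orient a b d) by ring.
lra.
Qed.

Lemma on_seg_common p a b c : on_seg p a b -> on_seg p a c ->
  orient a b c != 0 -> p = a.
Proof.
move=> /on_seg_orient p_ab [s [_ [_ ep]]] abc_neq0.
have : orient a b p = s * orient a b c by rewrite ep /orient /=; ring.
rewrite p_ab => /esym/eqP; rewrite mulf_eq0 (negbTE abc_neq0) orbF => /eqP s0.
by rewrite ep s0 !mul0r !addr0; case: (a).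
Qed.

End Orientation.

Section ConvexChain.
Variable R : realFieldType.
Implicit Type q : seq (point R).

Definition ccw_chain q : Prop :=
  forall i j k, (i < j)%N -> (j < k)%N -> (k < size q)%N -> 0 < orient q`_i q`_j q`_k.

Variables (q : seq (point R)) (q_ccw : ccw_chain q).

Lemma ccw_chain_cyclic i j k : (i < size q)%N -> (j < size q)%N -> (k < size q)%N ->
  cyclic_order i j k -> 0 < orient q`_i q`_j q`_k.
Proof.
move=> lt_i lt_j lt_k /or3P [/andP [ij jk] | /andP [jk ki] | /andP [ki ij]].
- exact: q_ccw.
- by rewrite orient_cyc; apply: q_ccw.
- by rewrite -orient_cyc; apply: q_ccw.
Qed.

Lemma ccw_chain_orient i j k : (i < size q)%N -> (j < size q)%N -> (k < size q)%N ->
  [&& i != j, j != k & i != k] ->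
  if cyclic_order i j k then 0 < orient q`_i q`_j q`_k else orient q`_i q`_j q`_k < 0.
Proof.
move=> lt_i lt_j lt_k distinct; case: ifP => ijk; first exact: ccw_chain_cyclic.
rewrite -oppr_gt0 -orient_swap; apply: ccw_chain_cyclic => //.
by move: ijk distinct; rewrite /cyclic_order; lia.
Qed.

Lemma ccw_chain_orient_neq0 i j k : (i < size q)%N -> (j < size q)%N -> (k < size q)%N ->
  [&& i != j, j != k & i != k] -> orient q`_i q`_j q`_k != 0.
Proof.
move=> lt_i lt_j lt_k /(ccw_chain_orient lt_i lt_j lt_k).
by case: ifP => _ h; rewrite ?(gt_eqF h) ?(lt_eqF h).
Qed.

Lemma ccw_chain_common a b b' p :
  (a < size q)%N -> (b < size q)%N -> (b' < size q)%N -> [&& a != b, b != b' & a != b'] ->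
  on_seg p q`_a q`_b -> on_seg p q`_a q`_b' -> p = q`_a.
Proof.
move=> lt_a lt_b lt_b' distinct s1 s2.
by apply: (on_seg_common s1 s2); apply: ccw_chain_orient_neq0.
Qed.

Lemma ccw_chain_noncrossing a b a' b' p :
  (a < size q)%N -> (b < size q)%N -> (a' < size q)%N -> (b' < size q)%N ->
  a != b -> a' != b' -> [&& a != a', a != b', b != a' & b != b'] ->
  cyclic_order a b a' = cyclic_order a b b' ->
  on_seg p q`_a q`_b -> on_seg p q`_a' q`_b' -> False.
Proof.
move=> lt_a lt_b lt_a' lt_b' ab a'b' distinct same_side s1 s2.
apply: (on_seg_one_side s1 s2).
have := ccw_chain_orient lt_a lt_b lt_a'; have := ccw_chain_orient lt_a lt_b lt_b'.
rewrite -same_side; move: distinct => /and4P [aa' ab' ba' bb'].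
rewrite ab aa' ab' ba' bb' /= => /(_ isT) h' /(_ isT) h.
by case: ifP h h' => _ h h'; [apply: mulr_gt0 | rewrite -mulrNN; apply: mulr_gt0; rewrite oppr_gt0].
Qed.

End ConvexChain.

Section LadderOnConvexChain.
Variables (R : realFieldType) (n : nat) (C : seq (point R)).
Variables (col : point R -> point R -> bool) (c : bool) (q : seq (point R)).
Hypotheses (col_sym : forall p p', col p p' = col p' p) (q_ccw : ccw_chain q).
Hypotheses (q_uniq : uniq q) (size_q : size q = (2 * n)%N) (q_in_C : {subset q <= C}).
Hypothesis q_col : forall i j, (i < j)%N -> (j < 2 * n)%N -> ladder_link n i j ->
  col q`_i q`_j = c.

Lemma ladder_links_meet_at_ends a b a' b' p :
  (a < 2 * n)%N -> (b < 2 * n)%N -> (a' < 2 * n)%N -> (b' < 2 * n)%N ->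
  ladder_link n a b -> ladder_link n a' b' -> a != b -> a' != b' ->
  ~ (a = a' /\ b = b') -> ~ (a = b' /\ b = a') ->
  on_seg p q`_a q`_b -> on_seg p q`_a' q`_b' ->
  (p = q`_a \/ p = q`_b) /\ (p = q`_a' \/ p = q`_b').
Proof.
rewrite -size_q => lt_a lt_b lt_a' lt_b' link link' ab a'b' other other' s1 s2.
have [aa'|aa'] := eqVneq a a'; first subst a'.
  have p_a : p = q`_a by apply: (ccw_chain_common q_ccw _ _ _ _ s1 s2) => //; lia.
  by split; left.
have [ab'|ab'] := eqVneq a b'; first subst b'.
  have p_a : p = q`_a by apply: (ccw_chain_common q_ccw _ _ _ _ s1 (on_seg_sym s2)) => //; lia.
  by split; [left | right].
have [ba'|ba'] := eqVneq b a'; first subst a'.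
  have p_b : p = q`_b.
    by apply: (ccw_chain_common q_ccw _ _ _ _ (on_seg_sym s1) s2) => //; lia.
  by split; [right | left].
have [bb'|bb'] := eqVneq b b'; first subst b'.
  have p_b : p = q`_b.
    by apply: (ccw_chain_common q_ccw _ _ _ _ (on_seg_sym s1) (on_seg_sym s2)) => //; lia.
  by split; right.
exfalso; apply: (ccw_chain_noncrossing q_ccw _ _ _ _ ab a'b' _ _ s1 s2) => //.
  by rewrite aa' ab' ba' bb'.
by apply: ladder_links_nested link link' _; rewrite aa' ab' ba' bb'.
Qed.

Lemma ladder_on_ccw_chain : mono_noncrossing_ladder n C col.
Proof.
exists (fun x => q`_(ladder_pos x)), c; split; [|split; [|split]].
- move=> x y /eqP; rewrite nth_uniq ?size_q ?ladder_pos_lt // => /eqP.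
  exact: ladder_pos_inj.
- by move=> x; apply/q_in_C/mem_nth; rewrite size_q ladder_pos_lt.
- move=> x y /ladder_adj_link /andP [link _].
  have lt_x := ladder_pos_lt x; have lt_y := ladder_pos_lt y.
  have [lt_xy|le_yx] := ltnP (ladder_pos x) (ladder_pos y); first exact: q_col.
  rewrite col_sym; apply: q_col => //; move: link le_yx; rewrite /ladder_link; lia.
move=> x y x' y' /ladder_adj_link /andP [link xy] /ladder_adj_link /andP [link' x'y'].
move=> other other' p s1 s2.
apply: ladder_links_meet_at_ends => //; try exact: ladder_pos_lt.
  by case=> /ladder_pos_inj e1 /ladder_pos_inj e2; apply: other.
by case=> /ladder_pos_inj e1 /ladder_pos_inj e2; apply: other'.
Qed.

End LadderOnConvexChain.

Lemma in_hull3 (R : realFieldType) (S : seq (point R)) p a b c (wa wb wc : R) :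
  a \in S -> b \in S -> c \in S -> 0 <= wa -> 0 <= wb -> 0 <= wc ->
  wa + wb + wc = 1 ->
  wa * a.1 + wb * b.1 + wc * c.1 = p.1 -> wa * a.2 + wb * b.2 + wc * c.2 = p.2 ->
  in_hull S p.
Proof.
move=> aS bS cS wa0 wb0 wc0 w1 e1 e2.
pose at_ (x : point R) (w : R) (i : 'I_(size S)) := if val i == index x S then w else 0.
have sum_at x w (g : point R -> R) : x \in S ->
    \sum_(i < size S) at_ x w i * g (nth p S i) = w * g x.
  move=> xS; have ix : (index x S < size S)%N by rewrite index_mem.
  rewrite (bigD1 (Ordinal ix)) //= big1 ?addr0 => [|i /negPf ne]; last first.
    by rewrite /at_ -val_eqE /= in ne *; rewrite ne mul0r.
  by rewrite /at_ eqxx nth_index.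
have sum3 (g : point R -> R) : \sum_(i < size S)
    (at_ a wa i + at_ b wb i + at_ c wc i) * g (nth p S i) = wa * g a + wb * g b + wc * g c.
  by under eq_bigr do rewrite !mulrDl; rewrite !big_split /= !sum_at.
exists (fun i => at_ a wa i + at_ b wb i + at_ c wc i); split.
  by move=> i; rewrite /at_; do !case: ifP => _; lra.
split.
  have /= := sum3 (fun=> 1); rewrite !mulr1 w1 => <-.
  by apply: eq_bigr => i _; rewrite mulr1.
by split; rewrite sum3.
Qed.

Section ConvexPosition.
Variables (R : realFieldType) (C : seq (point R)).
Hypothesis cpC : convex_position C.
Implicit Types a b c o p x y z : point R.

Lemma cp_no_combination3 p a b c (wa wb wc : R) :
  p \in C -> a \in C -> b \in C -> c \in C -> a != p -> b != p -> c != p ->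
  0 <= wa -> 0 <= wb -> 0 <= wc -> 0 < wa + wb + wc ->
  wa * a.1 + wb * b.1 + wc * c.1 = (wa + wb + wc) * p.1 ->
  wa * a.2 + wb * b.2 + wc * c.2 = (wa + wb + wc) * p.2 -> False.
Proof.
case: cpC => uC notin_hull pC aC bC cC ap bp cp wa0 wb0 wc0 w_pos e1 e2.
apply: (notin_hull p pC); set w := wa + wb + wc in w_pos e1 e2.
have w_neq0 : w != 0 by rewrite gt_eqF.
apply: (in_hull3 (a := a) (b := b) (c := c) (wa := wa / w) (wb := wb / w) (wc := wc / w)).
- by rewrite mem_rem_uniq // inE ap.
- by rewrite mem_rem_uniq // inE bp.
- by rewrite mem_rem_uniq // inE cp.
- by rewrite divr_ge0 // ltW.
- by rewrite divr_ge0 // ltW.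
- by rewrite divr_ge0 // ltW.
- by rewrite -!mulrDl divff.
- by apply: (mulfI w_neq0); rewrite -e1; field.
- by apply: (mulfI w_neq0); rewrite -e2; field.
Qed.

(* No point of [C] lies in a triangle spanned by three other points of [C];
   the barycentric weights of p are the orientations below. *)
Lemma cp_notin_triangle p a b c :
  p \in C -> a \in C -> b \in C -> c \in C -> a != p -> b != p -> c != p ->
  0 <= orient p b c -> 0 <= orient p c a -> 0 <= orient p a b ->
  0 < orient p b c + orient p c a + orient p a b -> False.
Proof.
move=> pC aC bC cC ap bp cp h1 h2 h3 hs.
by apply: (cp_no_combination3 pC aC bC cC ap bp cp h1 h2 h3 hs); rewrite /orient; ring.
Qed.

(* No three points of [C] are collinear: otherwise one of them would lie
   between the other two. *)
Lemma cp_orient_neq0 a b c : a \in C -> b \in C -> c \in C ->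
  a != b -> b != c -> a != c -> orient a b c != 0.
Proof.
move=> aC bC cC ab bc ac; apply/eqP => o0.
have ba : b != a by rewrite eq_sym.
have cb : c != b by rewrite eq_sym.
have ca : c != a by rewrite eq_sym.
set N := (c.1 - a.1) ^+ 2 + (c.2 - a.2) ^+ 2.
have N_pos : 0 < N.
  rewrite lt_def addr_ge0 ?sqr_ge0 // andbT paddr_eq0 ?sqr_ge0 // !sqrf_eq0 !subr_eq0.
  apply/negP => /andP [/eqP e1 /eqP e2]; move/eqP: ac; apply.
  by move: e1 e2; case: (a) => ? ?; case: (c) => ? ? /= -> ->.
(* On the common line, b - a = (d / N) (c - a): the position of d relative to
   0 and N tells which of a, b, c lies between the two others. *)
set d := (c.1 - a.1) * (b.1 - a.1) + (c.2 - a.2) * (b.2 - a.2).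
have [d_le0|d_gt0] := lerP d 0.
  apply: (cp_no_combination3 (p := a) (a := b) (b := c) (c := c)
    (wa := N) (wb := - d) (wc := 0)) => //; try lra.
  - by apply: (eq_of_orient0 (k := c.2 - a.2) o0); rewrite /orient /N /d; ring.
  - by apply: (eq_of_orient0 (k := a.1 - c.1) o0); rewrite /orient /N /d; ring.
have [d_leN|d_gtN] := lerP d N.
  apply: (cp_no_combination3 (p := b) (a := a) (b := c) (c := c)
    (wa := N - d) (wb := d) (wc := 0)) => //; try lra.
  - by apply: (eq_of_orient0 (k := a.2 - c.2) o0); rewrite /orient /N /d; ring.
  - by apply: (eq_of_orient0 (k := c.1 - a.1) o0); rewrite /orient /N /d; ring.
apply: (cp_no_combination3 (p := c) (a := b) (b := a) (c := a)
  (wa := N) (wb := d - N) (wc := 0)) => //; try lra.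
- by apply: (eq_of_orient0 (k := c.2 - a.2) o0); rewrite /orient /N /d; ring.
- by apply: (eq_of_orient0 (k := a.1 - c.1) o0); rewrite /orient /N /d; ring.
Qed.

Lemma cp_orient_total a b c : a \in C -> b \in C -> c \in C ->
  a != b -> b != c -> a != c -> 0 < orient a b c \/ 0 < orient a c b.
Proof.
move=> aC bC cC ab bc ac; have := cp_orient_neq0 aC bC cC ab bc ac.
have [lt0|gt0|_] := ltgtP (orient a b c) 0 => // _.
- by right; rewrite orient_swap oppr_gt0.
- by left.
Qed.

Lemma cp_pivot_trans o x y z : o \in C -> x \in C -> y \in C -> z \in C ->
  0 < orient o x y -> 0 < orient o y z -> 0 < orient o x z.
Proof.
move=> oC xC yC zC oxy oyz.
have [ox xy oy] := orient_pos_neq oxy; have [_ yz oz] := orient_pos_neq oyz.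
have [xz|xz] := eqVneq x z; first by move: oyz; rewrite -xz orient_swap; lra.
case: (cp_orient_total oC xC zC ox xz oz) => // ozx; exfalso.
apply: (cp_notin_triangle (p := o) (a := x) (b := y) (c := z)); rewrite 1?eq_sym //.
all: by move: ozx; rewrite orient_swap; lra.
Qed.

Lemma cp_pivot_ccw o x y z : o \in C -> x \in C -> y \in C -> z \in C ->
  0 < orient o x y -> 0 < orient o y z -> 0 < orient x y z.
Proof.
move=> oC xC yC zC oxy oyz; have oxz := cp_pivot_trans oC xC yC zC oxy oyz.
have [ox xy oy] := orient_pos_neq oxy; have [_ yz oz] := orient_pos_neq oyz.
have [_ xz _] := orient_pos_neq oxz.
case: (cp_orient_total xC yC zC xy yz xz) => // xzy; exfalso.
have e1 : orient y x z = orient x z y by rewrite orient_cyc.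
have e2 : orient y z o = orient o y z by rewrite -orient_cyc.
have e3 : orient y o x = orient o x y by rewrite orient_cyc.
have zy : z != y by rewrite eq_sym.
apply: (cp_notin_triangle (p := y) (a := o) (b := x) (c := z)) => //.
all: by rewrite ?e1 ?e2 ?e3; lra.
Qed.

End ConvexPosition.

Section AroundPivot.
Variables (R : realFieldType) (C : seq (point R)) (o : point R).
Hypotheses (cpC : convex_position C) (oC : o \in C).
Implicit Types x y z : point R.

(* [x] comes strictly before [y] when the points of [C] are swept
   counterclockwise around [o], the pivot [o] itself coming last. *)
Definition before x y : bool :=
  [&& x \in C, y \in C, x != o & (y == o) || (0 < orient o x y)].

Definition before_eq x y : bool := (x == y) || before x y.

Lemma before_irr : irreflexive before.
Proof.
move=> x; apply/negP => /and4P [_ _ xo /orP [/eqP xo'|]]; first by rewrite xo' eqxx in xo.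
by case/orient_pos_neq => _; rewrite eqxx.
Qed.

Lemma before_trans : transitive before.
Proof.
move=> y x z /and4P [xC yC xo /orP [/eqP yo|xy]]; first by rewrite /before yo eqxx /= !andbF.
move=> /and4P [_ zC _ /orP [/eqP zo | yz]]; first by rewrite /before xC zC xo zo eqxx.
by rewrite /before xC zC xo (cp_pivot_trans cpC oC xC yC zC xy yz) orbT.
Qed.

Lemma before_ccw x y z : before x y -> before y z -> 0 < orient x y z.
Proof.
move=> /and4P [xC yC xo /orP [/eqP yo|xy]]; first by rewrite /before yo eqxx /= !andbF.
move=> /and4P [_ zC _ /orP [/eqP -> | yz]]; first by rewrite -orient_cyc.
exact: (cp_pivot_ccw cpC oC xC yC zC xy yz).
Qed.

Lemma before_eq_trans : transitive before_eq.
Proof.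
move=> y x z /orP [/eqP -> // | xy] /orP [/eqP <- | yz]; first by rewrite /before_eq xy orbT.
by rewrite /before_eq (before_trans xy yz) orbT.
Qed.

Lemma before_eq_total : {in C &, total before_eq}.
Proof.
move=> x y xC yC; have [-> | xy] := eqVneq x y; first by rewrite /before_eq eqxx.
rewrite /before_eq /before xC yC (negbTE xy) [y == x]eq_sym (negbTE xy) /=.
have [yo | yo] := eqVneq y o; first by subst y; rewrite xy.
have [xo | xo] := eqVneq x o; first by subst x.
have ox : o != x by rewrite eq_sym.
have oy : o != y by rewrite eq_sym.
by case: (cp_orient_total cpC oC xC yC ox xy oy) => ->; rewrite ?orbT.
Qed.

Lemma pairwise_before_ccw q : pairwise before q -> ccw_chain q.
Proof.
move=> /(pairwiseP 0) q_before i j k ij jk k_lt.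
have lt_j := ltn_trans jk k_lt; have lt_i := ltn_trans ij lt_j.
by apply: (before_ccw (y := q`_j)); apply: q_before.
Qed.

Lemma sort_before_eq X : {subset X <= C} -> pairwise before_eq (sort before_eq X).
Proof.
move=> XC; rewrite -sorted_pairwise; last exact: before_eq_trans.
by apply: (sort_sorted_in (P := mem C)) => //; [exact: before_eq_total | apply/allP].
Qed.

Lemma sort_before X : {subset X <= C} -> uniq X -> pairwise before (sort before_eq X).
Proof.
move=> XC uX; have := sort_before_eq XC; have : uniq (sort before_eq X) by rewrite sort_uniq.
elim: (sort _ _) => //= x s IH /andP [x_notin us] /andP [x_s s_eq].
rewrite IH // andbT; apply/allP => y ys; case/allP/(_ y ys)/orP: x_s => // /eqP xy.
by rewrite xy ys in x_notin.
Qed.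

End AroundPivot.

(* The diagonals of a convex quadrilateral abcd cross: no line has a and c
   strictly on one side and b and d strictly on the other. *)
Lemma no_line_separates_diagonals (R : realFieldType) (a b c d : point R) (u v w : R) :
  0 < orient a b c -> 0 < orient a b d -> 0 < orient a c d -> 0 < orient b c d ->
  u * a.1 + v * a.2 < w -> u * c.1 + v * c.2 < w ->
  w < u * b.1 + v * b.2 -> w < u * d.1 + v * d.2 -> False.
Proof.
move=> abc abd acd bcd a_lt c_lt b_gt d_gt.
(* The signed distances to the line of the four vertices satisfy a linear
   relation with positive coefficients that forbids this sign pattern. *)
have balance : orient b c d * (u * a.1 + v * a.2 - w) + orient a b d * (u * c.1 + v * c.2 - w)
    = orient a c d * (u * b.1 + v * b.2 - w) + orient a b c * (u * d.1 + v * d.2 - w).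
  by rewrite /orient; ring.
have := pmulr_rlt0 (u * a.1 + v * a.2 - w) bcd; have := pmulr_rlt0 (u * c.1 + v * c.2 - w) abd.
have := pmulr_rgt0 (u * b.1 + v * b.2 - w) acd; have := pmulr_rgt0 (u * d.1 + v * d.2 - w) abc.
rewrite !subr_gt0 !subr_lt0 b_gt d_gt a_lt c_lt; lra.
Qed.

Lemma pairwise_last (T : eqType) (r : rel T) (s : seq T) x0 y :
  pairwise r s -> y \in s -> y != last x0 s -> r y (last x0 s).
Proof.
case/lastP: s => // s x; rewrite last_rcons pairwise_rcons mem_rcons inE.
by case/andP => /allP s_x _ /orP [/eqP -> | ys]; [rewrite eqxx | move=> _; apply: s_x].
Qed.

Section Pivot.
Variables (R : realFieldType) (C L Rs : seq (point R)).
Hypotheses (cpC : convex_position C) (LC : {subset L <= C}) (RC : {subset Rs <= C}).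
Hypothesis disjLR : forall p, p \in L -> p \notin Rs.
Hypothesis sepLR : line_separated L Rs.

Lemma neq_LR l r : l \in L -> r \in Rs -> l != r.
Proof. by move=> lL rR; apply: contraNneq (disjLR lL) => ->. Qed.

(* If [o] is the last point of [Rs] as seen counterclockwise from some
   [l0] in [L], then around [o] all of [L] comes before all of [Rs]: any
   other order would make a line-separated quadrilateral with crossing
   diagonals. *)
Lemma last_seen_is_pivot l0 o : l0 \in L -> o \in Rs ->
  (forall r, r \in Rs -> r != o -> 0 < orient l0 r o) ->
  forall l r, l \in L -> r \in Rs -> before C o l r.
Proof.
move=> l0L oR o_last l r lL rR; have [u [v [w [_ [sepL sepR]]]]] := sepLR.
have lC := LC lL; have rC := RC rR; have oC := RC oR; have l0C := LC l0L.
rewrite /before lC rC (neq_LR lL oR) /=; have [// | ro] := eqVneq r o; rewrite /=.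
have l0ro := o_last r rR ro.
have [-> | ll0] := eqVneq l l0; first by rewrite orient_cyc.
have l0l : l0 != l by rewrite eq_sym.
case: (cp_orient_total cpC l0C lC rC l0l (neq_LR lL rR) (neq_LR l0L rR)) => [l0lr | l0rl].
  by rewrite orient_cyc; apply: (cp_pivot_ccw cpC l0C lC rC oC).
case: (cp_orient_total cpC l0C lC oC l0l (neq_LR lL oR) (neq_LR l0L oR)) => [l0lo | l0ol].
  have rlo := cp_pivot_ccw cpC l0C rC lC oC l0rl l0lo; exfalso.
  exact: (no_line_separates_diagonals l0rl l0ro l0lo rlo
           (sepL _ l0L) (sepL _ lL) (sepR _ rR) (sepR _ oR)).
by rewrite -orient_cyc; apply: (cp_pivot_ccw cpC l0C rC oC lC).
Qed.

Lemma exists_pivot : L != [::] -> Rs != [::] ->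
  exists2 o, o \in Rs & forall l r, l \in L -> r \in Rs -> before C o l r.
Proof.
move=> L_ne Rs_ne; set l0 := head 0 L.
have l0L : l0 \in L by rewrite /l0 -nth0 mem_nth // lt0n size_eq0.
set Y := sort (before_eq C l0) Rs; set o := last l0 Y.
have memY : Y =i Rs by apply: mem_sort.
have oR : o \in Rs.
  by rewrite -memY /o -nth_last mem_nth // ltn_predL size_sort lt0n size_eq0.
exists o => //; apply: (last_seen_is_pivot l0L oR) => r rR ro.
have : before_eq C l0 r o.
  by apply: pairwise_last; rewrite ?memY //; exact: (sort_before_eq cpC (LC l0L) RC).
case/orP=> [/eqP ro' | /and4P [_ _ _ /orP [/eqP ol0 | //]]]; first by rewrite ro' eqxx in ro.
by move: (neq_LR l0L oR); rewrite ol0 eqxx.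
Qed.

End Pivot.

Section MonochromaticLadder.
Variables (R : realFieldType) (n : nat) (C : seq (point R)) (o : point R).
Variables (col : point R -> point R -> bool) (c0 : bool).
Hypotheses (n_gt0 : (0 < n)%N) (cpC : convex_position C) (oC : o \in C).
Hypothesis col_sym : forall p p', col p p' = col p' p.

Local Notation before := (before C o).

Lemma ladder_on_swept q c : pairwise before q -> size q = (2 * n)%N -> {subset q <= C} ->
  (forall i j, (i < j)%N -> (j < 2 * n)%N -> ladder_link n i j -> col q`_i q`_j = c) ->
  mono_noncrossing_ladder n C col.
Proof.
move=> q_before size_q q_in_C q_col.
apply: (ladder_on_ccw_chain (c := c) (q := q)) => //; first exact: pairwise_before_ccw q_before.
exact: pairwise_uniq (before_irr C o) q_before.
Qed.

Lemma path_or_ladder X : {subset X <= C} -> uniq X -> size X = (2 * n ^ 2)%N ->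
  (exists p, [/\ {subset p <= X}, pairwise before p, size p = n &
                 sorted (fun x y => col x y == c0) p]) \/
  mono_noncrossing_ladder n C col.
Proof.
move=> XC uX size_X; set Y := sort (before_eq C o) X.
have Y_before : pairwise before Y := sort_before cpC oC XC uX.
have memY : Y =i X := mem_sort _ _.
have two_n_gt0 : (0 < 2 * n)%N by rewrite muln_gt0 n_gt0.
have big : (n.-1 * (2 * n).-1 < size Y)%N by rewrite size_sort size_X; nia.
have [[p [sub_p size_p path_p]] | [p [sub_p size_p p_other]]] :=
  chain_or_antichain (fun x y => col x y == c0) n_gt0 two_n_gt0 big.
  left; exists p; split => //; first by move=> x /(mem_subseq sub_p); rewrite memY.
  exact: subseq_pairwise sub_p Y_before.
right; apply: (ladder_on_swept (q := p) (c := ~~ c0)) => //.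
- exact: subseq_pairwise sub_p Y_before.
- by move=> x /(mem_subseq sub_p); rewrite memY => /XC.
move=> i j ij jn _; move/(pairwiseP 0): p_other => /(_ i j).
rewrite !inE size_p (ltn_trans ij jn) => /(_ isT jn ij).
by case: (col _ _); case: (c0).
Qed.

Lemma ladder_of_two_paths pL pR :
  pairwise before pL -> pairwise before pR -> {subset pL <= C} -> {subset pR <= C} ->
  (forall l r, l \in pL -> r \in pR -> before l r /\ col l r = c0) ->
  size pL = n -> size pR = n ->
  sorted (fun x y => col x y == c0) pL -> sorted (fun x y => col x y == c0) pR ->
  mono_noncrossing_ladder n C col.
Proof.
move=> pL_before pR_before pL_C pR_C cross size_pL size_pR path_L path_R.
apply: (ladder_on_swept (q := pL ++ pR) (c := c0)).
- rewrite pairwise_cat pL_before pR_before !andbT; apply/allrelP => l r lL rR.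
  by case: (cross l r lL rR).
- by rewrite size_cat size_pL size_pR; lia.
- by move=> x; rewrite mem_cat => /orP [/pL_C | /pR_C].
move=> i j ij jn link; rewrite !nth_cat size_pL.
have [j_lt_n | n_le_j] := ltnP j n.
  have ji : j = i.+1 by move: link; rewrite /ladder_link; lia.
  by subst j; rewrite (ltnW j_lt_n); apply/eqP/(sortedP 0 path_L); rewrite size_pL.
have [i_lt_n | n_le_i] := ltnP i n.
  apply: (cross _ _ _ _).2; apply: mem_nth.
    by rewrite size_pL.
  by rewrite size_pR; lia.
have ji : j = i.+1 by move: link; rewrite /ladder_link; lia.
subst j; rewrite subSn //.
by apply/eqP/(sortedP 0 path_R); rewrite size_pR; lia.
Qed.

End MonochromaticLadder.

Theorem lemmal (R : realFieldType) (n : nat) (C : seq (point R))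
    (col : point R -> point R -> bool) (L Rs : seq (point R)) :
  (1 <= n)%N ->
  convex_position C ->
  (forall p q, col p q = col q p) ->
  uniq L -> uniq Rs ->
  {subset L <= C} -> {subset Rs <= C} ->
  (forall p, p \in L -> p \notin Rs) ->
  size L = (2 * n ^ 2)%N -> size Rs = (2 * n ^ 2)%N ->
  line_separated L Rs ->
  (exists c : bool, forall p q, p \in L -> q \in Rs -> col p q = c) ->
  mono_noncrossing_ladder n C col.
Proof.
move=> n_gt0 cpC col_sym uL uR LC RC disjLR sizeL sizeR sepLR [c0 col_LR].
have [o oR L_before_R] : exists2 o, o \in Rs & forall l r, l \in L -> r \in Rs -> before C o l r.
  apply: exists_pivot => //; rewrite -size_eq0 -lt0n ?sizeL ?sizeR;
  by rewrite muln_gt0 expn_gt0 n_gt0.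
have oC := RC o oR.
have [[pL [pL_L pL_before size_pL path_L]] | //] :=
  path_or_ladder c0 n_gt0 cpC oC col_sym LC uL sizeL.
have [[pR [pR_R pR_before size_pR path_R]] | //] :=
  path_or_ladder c0 n_gt0 cpC oC col_sym RC uR sizeR.
apply: (ladder_of_two_paths (c0 := c0) n_gt0 cpC oC col_sym pL_before pR_before) => //.
- by move=> x /pL_L /LC.
- by move=> x /pR_R /RC.
by move=> l r /pL_L lL /pR_R rR; split; [apply: L_before_R | apply: col_LR].
Qed.
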